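(* Let $0<\tau<T$, let $\kappa_3,\kappa_T$ satisfy $0<\kappa_3<\kappa_T<1$, and let $t_3\in(\tau,T)$. Set \[ \lambda^{\star\star}(\kappa_3,\kappa_T,t_3):=\frac{\kappa_T-\kappa_3}{g_*(\kappa_3,\kappa_T)\int_{t_3}^{T}A^+(\xi,T)\,d\xi} \] and let $0<\gamma_3\le(\kappa_T-\kappa_3)/(T-t_3)$. Then for every $\lambda>\lambda^{\star\star}(\kappa_3,\kappa_T,t_3)$, the solution $(x(t),y(t))$ of \[ x'=y,\qquad y'=-\lambda a^+(t)g(x) \] with $x(T)=\kappa_T$, $y(T)=0$ satisfies $x(t_3)<\kappa_3$ and $y(t_3)>\gamma_3$.
   Context: $a\in L^1(\tau,T)$ with positive part $a^+$, and $A^+(t',t''):=\int_{t'}^{t''}a^+(\xi)\,d\xi$; it is assumed that $A^+(t,T)>0$ for all $t\in[\tau,T)$. $g\colon\mathbb{R}\to[0,+\infty)$ is the extension by zero outside $[0,1]$ of a locally Lipschitz continuous function $g\colon[0,1]\to[0,+\infty)$ with $g(0)=g(1)=0$, $g(s)>0$ for $0<s<1$ and $\lim_{s\to0^+}g(s)/s=0$. For $0\le\kappa'<\kappa''\le1$, $g_*(\kappa',\kappa''):=\min_{s\in[\kappa',\kappa'']}g(s)$. Solutions are in the Carathéodory sense on $[\tau,T]$. *)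

From HB Require Import structures.
From mathcomp Require Import all_boot all_order all_algebra.
From mathcomp Require Import all_classical all_reals all_analysis.
Set Implicit Arguments. Unset Strict Implicit. Unset Printing Implicit Defensive.
Import Order.TTheory GRing.Theory Num.Theory.
Import numFieldNormedType.Exports.
Local Open Scope classical_set_scope.
Local Open Scope ring_scope.

Definition ppart {R : realType} (a : R -> R) : R -> R := fun t => Num.max (a t) 0.

Definition Aplus {R : realType} (a : R -> R) (t1 t2 : R) : R :=
  (\int[lebesgue_measure]_(xi in `[t1, t2]) ppart a xi)%R.

(* g_*(k1,k2) = min_{s in [k1,k2]} g s  (the min exists for continuous g; we
   write it as the infimum of the image) *)
Definition gstar {R : realType} (g : R -> R) (k1 k2 : R) : R :=
  inf [set g s | s in `[k1, k2]].

(* g : [0,1] -> [0,+oo) locally Lipschitz, extended by zero, g(0)=g(1)=0,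
   g > 0 on (0,1), g(s)/s -> 0 as s -> 0+. *)
Definition admissible_g {R : realType} (g : R -> R) : Prop :=
  [/\ (forall s, 0 <= g s),
      (forall s, (s < 0 \/ 1 < s) -> g s = 0),
      (forall s, 0 <= s <= 1 -> exists2 d : R, 0 < d & exists L : R,
          forall u v, 0 <= u <= 1 -> 0 <= v <= 1 -> `|u - s| < d -> `|v - s| < d ->
            `|g u - g v| <= L * `|u - v|),
      (g 0 = 0 /\ g 1 = 0 /\ forall s, 0 < s < 1 -> 0 < g s) &
      ((fun s => g s / s) @ at_right 0 --> 0)].

(* Caratheodory solution on [tau, T] of x' = y, y' = - lam a^+(t) g(x),
   written in the equivalent integral form: x, y continuous on [tau,T]
   (the integrands are then integrable, and x, y are absolutely continuous)
   and for every t in [tau,T]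
     x(t) = x(T) - \int_t^T y,   y(t) = y(T) + \int_t^T lam a^+ g(x). *)
Definition cara_solution {R : realType} (tau T lam : R) (a g : R -> R)
  (x y : R -> R) : Prop :=
  [/\ {within `[tau, T], continuous x},
      {within `[tau, T], continuous y} &
      forall t, tau <= t <= T ->
        x t = x T - (\int[lebesgue_measure]_(s in `[t, T]) y s)%R /\
        y t = y T + (\int[lebesgue_measure]_(s in `[t, T]) (lam * ppart a s * g (x s)))%R].

From HB Require Import structures.
From mathcomp Require Import all_boot all_order all_algebra.
From mathcomp Require Import all_classical all_reals all_analysis.
From mathcomp Require Import lra measurable_realfun.
Set Implicit Arguments.
Unset Strict Implicit.
Unset Printing Implicit Defensive.

(* Since y(T) = 0 and y' = -lam a^+ g(x) <= 0, y is nonnegative and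
   nonincreasing on [tau, T], so x is nondecreasing there.  If x(t3) >= k3,
   then x stays in [k3, kT] on [t3, T], hence y(t) >= lam g_* A^+(t, T) there
   and, integrating,
     kT - x(t3) = \int_t3^T y >= lam g_* \int_t3^T A^+(xi, T) dxi > kT - k3,
   a contradiction.  Hence \int_t3^T y = kT - x(t3) > kT - k3, and as y is
   nonincreasing this integral is at most (T - t3) y(t3).  The hypothesis on
   lam is meaningful because g_* > 0 (g is continuous and positive on (0, 1))
   and \int_t3^T A^+(xi, T) dxi > 0 (A^+(., T) is nonincreasing and positive
   on [tau, T)). *)

Import Order.TTheory GRing.Theory Num.Theory.
Import numFieldNormedType.Exports.
Local Open Scope classical_set_scope.
Local Open Scope ring_scope.

Section clamp.
Context {R : realDomainType}.
Implicit Types a b s t : R.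

Definition clamp a b t : R := Num.min (Num.max t a) b.

Lemma clamp_id a b t : a <= t <= b -> clamp a b t = t.
Proof. by case/andP=> ta tb; rewrite /clamp (max_l ta) (min_l tb). Qed.

Lemma clamp_itv a b t : a <= b -> a <= clamp a b t <= b.
Proof. by move=> ab; rewrite /clamp le_min ge_min le_max !lexx ab !orbT. Qed.

Lemma clamp_nondecreasing a b : {homo clamp a b : s t / s <= t}.
Proof. by move=> s t st; apply: le_min2 (le_max2 st _) _. Qed.

Lemma dist_clamp a b s t : `|clamp a b s - clamp a b t| <= `|s - t|.
Proof.
wlog st : s t / s <= t.
  move=> H; case: (leP s t) => [/H //|/ltW/H].
  by rewrite distrC [`|t - s|]distrC.
rewrite distrC [`|s - t|]distrC !ger0_norm ?subr_ge0 ?clamp_nondecreasing //.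
rewrite /clamp; case: (leP (Num.max s a) b) => sb; case: (leP (Num.max t a) b) => tb.
all: move: sb tb; case: (leP s a) => sa; case: (leP t a) => ta => sb tb; lra.
Qed.

End clamp.

Lemma lipschitz_at_continuous {R : realType} (f : R -> R) (s d L : R) :
  0 < d -> (forall u, `|u - s| < d -> `|f u - f s| <= L * `|u - s|) ->
  {for s, continuous f}.
Proof.
move=> d0 fL; apply/cvgrPdist_le => e e0.
have L1 : 0 < `|L| + 1 by rewrite ltr_wpDl.
have eL : 0 < e / (`|L| + 1) by rewrite divr_gt0.
near=> u.
have [us_d us_e] : `|u - s| < d /\ `|u - s| < e / (`|L| + 1).
  by rewrite distrC; split; near: u; exact: cvgr_dist_lt.
rewrite distrC (le_trans (fL u us_d)) //.
rewrite (le_trans (_ : _ <= (`|L| + 1) * `|u - s|)) //.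
  by rewrite ler_wpM2r // (le_trans (ler_norm L)) // lerDl.
by rewrite mulrC -ler_pdivlMr // ltW.
Unshelve. all: by end_near.
Qed.

Lemma gstar_le {R : realType} (g : R -> R) (k1 k2 s : R) :
  (forall s, 0 <= g s) -> k1 <= s <= k2 -> gstar g k1 k2 <= g s.
Proof.
move=> g_ge0 s_in; apply: ge_inf; first by exists 0 => _ [u _ <-].
by exists s; rewrite //= in_itv.
Qed.

Section admissible_g.
Context {R : realType} (g : R -> R).
Hypothesis hg : admissible_g g.

Lemma admissible_g_ge0 s : 0 <= g s.
Proof. by case: hg. Qed.

Lemma admissible_g_clamp u : g (clamp 0 1 u) = g u.
Proof.
have [g_ge0 g_out _ [g0 [g1 _]] _] := hg.
have [u0|u0] := ltP u 0.
  by rewrite /clamp (max_r (ltW u0)) (min_l ler01) g0 g_out //; left.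
have [u1|u1] := leP u 1; first by rewrite clamp_id ?u0.
by rewrite /clamp (max_l u0) (min_r (ltW u1)) g1 g_out //; right.
Qed.

(* g = g \o clamp 0 1 and clamp is 1-Lipschitz, so the local Lipschitz bound
   of g on [0, 1] holds around every point of R. *)
Lemma admissible_g_lipschitz_at s : exists2 d, 0 < d &
  exists L, forall u, `|u - s| < d -> `|g u - g s| <= L * `|u - s|.
Proof.
have [_ _ g_lip _ _] := hg.
have [d d0 [L gL]] := g_lip _ (clamp_itv s ler01).
exists d => //; exists `|L| => u us_d.
have cus := dist_clamp 0 1 u s.
rewrite -admissible_g_clamp -[g s]admissible_g_clamp.
rewrite (le_trans (gL _ _ (clamp_itv u ler01) (clamp_itv s ler01) _ _)) //.
- exact: le_lt_trans cus us_d.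
- by rewrite subrr normr0.
- by rewrite (le_trans (ler_wpM2r (normr_ge0 _) (ler_norm L))) // ler_wpM2l.
Qed.

Lemma admissible_g_continuous : continuous g.
Proof.
move=> s; have [d d0 [L gL]] := admissible_g_lipschitz_at s.
exact: lipschitz_at_continuous d0 gL.
Qed.

Lemma gstar_gt0 k1 k2 : 0 < k1 -> k1 <= k2 -> k2 < 1 -> 0 < gstar g k1 k2.
Proof.
move=> k1_gt0 k12 k2_lt1; have [_ _ _ [_ [_ g_gt0]] _] := hg.
have [c c_in c_min] := EVT_min k12 (continuous_subspaceT admissible_g_continuous).
move: (c_in); rewrite in_itv /= => /andP[k1c ck2].
apply: (@lt_le_trans _ _ (g c)).
  by apply: g_gt0; rewrite (lt_le_trans k1_gt0 k1c) (le_lt_trans ck2 k2_lt1).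
apply: lb_le_inf; first by exists (g k1), k1; rewrite //= in_itv /= lexx k12.
by move=> _ [u u_in <-]; exact: c_min.
Qed.

End admissible_g.

Lemma integrable_subitv {R : realType} (f : R -> \bar R) (a b c d : R) :
  a <= c -> d <= b -> lebesgue_measure.-integrable `[a, b] f ->
  lebesgue_measure.-integrable `[c, d] f.
Proof. by move=> ac db; apply: integrableS => //; apply: subset_itv; rewrite bnd_simp. Qed.

Lemma ge0_Rintegral_subitv {R : realType} (f : R -> R) (a b c d : R) :
  a <= c -> d <= b -> lebesgue_measure.-integrable `[a, b] (EFin \o f) ->
  (forall t, a <= t <= b -> 0 <= f t) ->
  \int[lebesgue_measure]_(t in `[c, d]) f t <=
  \int[lebesgue_measure]_(t in `[a, b]) f t.
Proof.
move=> ac db fi f_ge0.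
have fi' := integrable_subitv ac db fi.
rewrite /Rintegral fine_le //; try exact: integrable_fin_num.
apply: ge0_subset_integral => //; first exact: measurable_int fi.
by apply: subset_itv; rewrite bnd_simp.
Qed.

Lemma Rintegral_itv_cst {R : realType} (a b r : R) : a <= b ->
  \int[lebesgue_measure]_(t in `[a, b]) r = r * (b - a).
Proof.
move=> ab; rewrite Rintegral_cst //; congr (_ * _).
have := lebesgue_measure_itv `[a, b]; rewrite /= lte_fin => /(congr1 fine) ->.
case: ltP => [//|ba]; have -> : b = a by apply/eqP; rewrite eq_le ab ba.
by rewrite subrr.
Qed.

Lemma nonincreasing_integrable {R : realType} (f : R -> R) (a b : R) :
  {in `[a, b] &, {homo f : u v /~ u <= v}} ->
  lebesgue_measure.-integrable `[a, b] (EFin \o f).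
Proof.
move=> f_ni; have [ab|ba] := leP a b; last first.
  by rewrite set_itv_ge ?bnd_simp -?ltNge //; exact: integrable_set0.
have clamp_in t : clamp a b t \in `[a, b] by rewrite in_itv /= clamp_itv.
apply: measurable_bounded_integrable => //.
- exact: compact_finite_measure (@segment_compact _ a b).
- apply: (eq_measurable_fun (f \o clamp a b)).
    by move=> t; rewrite inE /= in_itv /= => t_in; rewrite /= clamp_id.
  apply: nonincreasing_measurable => // s t st.
  by apply: f_ni; rewrite ?clamp_in ?clamp_nondecreasing.
- have a_in : a \in `[a, b] by rewrite in_itv /= lexx ab.
  have b_in : b \in `[a, b] by rewrite in_itv /= lexx ab.
  rewrite /bounded_near; near=> M => t /= t_in.
  have [fbt fta] : f b <= f t /\ f t <= f a.
    by move: (t_in); rewrite in_itv /= => /andP[a_t tb]; split; apply: f_ni.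
  apply: (@le_trans _ _ (`|f a| + `|f b|)).
    rewrite ler_norml; have := ler_norm (f a); have := ler_norm (- f b).
    by rewrite normrN; have := normr_ge0 (f a); have := normr_ge0 (f b); lra.
  by near: M; apply: nbhs_pinfty_ge; rewrite num_real.
Unshelve. all: by end_near.
Qed.

Lemma integrable_itv_cst {R : realType} (a b r : R) :
  lebesgue_measure.-integrable `[a, b] (EFin \o cst r).
Proof.
apply: continuous_compact_integrable; first exact: segment_compact.
exact/continuous_subspaceT/cst_continuous.
Qed.

Lemma nonincreasing_Rintegral_gt0 {R : realType} (f : R -> R) (a b c : R) :
  a < c -> c <= b -> {in `[a, b] &, {homo f : u v /~ u <= v}} ->
  (forall t, a <= t <= b -> 0 <= f t) -> 0 < f c ->
  0 < \int[lebesgue_measure]_(t in `[a, b]) f t.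
Proof.
move=> ac cb f_ni f_ge0 fc_gt0.
have fi := nonincreasing_integrable f_ni.
apply: (lt_le_trans _ (ge0_Rintegral_subitv (lexx a) cb fi f_ge0)).
rewrite (lt_le_trans _ (le_Rintegral _ (integrable_itv_cst a c (f c)) _ _)) //.
- by rewrite Rintegral_itv_cst ?(ltW ac) // mulr_gt0 // subr_gt0.
- exact: integrable_subitv (lexx a) cb fi.
- move=> t; rewrite /= in_itv /= => /andP[a_t tc]; apply: f_ni => //.
  + by rewrite in_itv /= (ltW ac) cb.
  + by rewrite in_itv /= a_t (le_trans tc cb).
Qed.

Lemma ppart_ge0 {R : realType} (a : R -> R) t : 0 <= ppart a t.
Proof. by rewrite /ppart le_max lexx orbT. Qed.

Lemma integrable_ppart {R : realType} (a : R -> R) (t1 t2 : R) :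
  lebesgue_measure.-integrable `[t1, t2] (EFin \o a) ->
  lebesgue_measure.-integrable `[t1, t2] (EFin \o ppart a).
Proof.
move=> ai; apply: eq_integrable (integrable_funepos _ ai) => // t _.
by rewrite funeposE /= /ppart EFin_max.
Qed.

Lemma Aplus_ge0 {R : realType} (a : R -> R) t1 t2 : 0 <= Aplus a t1 t2.
Proof. by apply: Rintegral_ge0 => t _; exact: ppart_ge0. Qed.

Section Aplus.
Context {R : realType} (tau T : R) (a : R -> R).
Hypothesis ha : lebesgue_measure.-integrable `[tau, T] (EFin \o a).

Lemma Aplus_nonincreasing u v : tau <= u -> u <= v -> Aplus a v T <= Aplus a u T.
Proof.
move=> tau_u uv; apply: ge0_Rintegral_subitv uv (lexx T) _ _.
  exact: integrable_subitv tau_u (lexx T) (integrable_ppart ha).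
by move=> t _; exact: ppart_ge0.
Qed.

Lemma Aplus_nonincreasing_in t : tau <= t ->
  {in `[t, T] &, {homo (fun xi => Aplus a xi T) : u v /~ u <= v}}.
Proof.
move=> tau_t u v _; rewrite in_itv /= => /andP[tv _] vu.
by apply: Aplus_nonincreasing vu; exact: le_trans tv.
Qed.

Lemma integral_Aplus_gt0 t : tau <= t < T ->
  (forall s, tau <= s < T -> 0 < Aplus a s T) ->
  0 < \int[lebesgue_measure]_(xi in `[t, T]) Aplus a xi T.
Proof.
case/andP=> tau_t tT A_gt0.
apply: (@nonincreasing_Rintegral_gt0 _ _ _ _ ((t + T) / 2)).
- by rewrite midf_lt.
- by rewrite ltW // midf_lt.
- exact: Aplus_nonincreasing_in.
- by move=> s _; exact: Aplus_ge0.
- apply: A_gt0; rewrite midf_lt // andbT.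
  by rewrite (le_trans tau_t) // ltW // midf_lt.
Qed.

End Aplus.

Section cara_solution.
Context {R : realType} (tau T lam : R) (a g x y : R -> R).
Hypotheses (tauT : tau <= T) (lam_ge0 : 0 <= lam)
  (ha : lebesgue_measure.-integrable `[tau, T] (EFin \o a))
  (g_ge0 : forall s, 0 <= g s) (g_cont : continuous g)
  (sol : cara_solution tau T lam a g x y) (yT : y T = 0).

Lemma integrable_rhs :
  lebesgue_measure.-integrable `[tau, T] (EFin \o (fun s => lam * ppart a s * g (x s))).
Proof.
have [x_cont _ _] := sol.
have gx_cont : {within `[tau, T], continuous (g \o x)}.
  by apply: within_continuous_comp x_cont => t _; exact: g_cont.
have [c _ gx_max] := EVT_max tauT gx_cont.
have lam_ai : lebesgue_measure.-integrable `[tau, T] (EFin \o (fun s => lam * ppart a s)).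
  by apply: eq_integrable (integrableZl _ lam (integrable_ppart ha)) => // t _.
apply: eq_integrable (integrableMl _ lam_ai _ _) => //.
- exact: subspace_continuous_measurable_fun gx_cont.
- rewrite /bounded_near; near=> M => t /= t_in.
  rewrite ger0_norm //; apply: le_trans (gx_max t t_in) _.
  by near: M; apply: nbhs_pinfty_ge; rewrite num_real.
Unshelve. all: by end_near.
Qed.

Lemma integrable_y : lebesgue_measure.-integrable `[tau, T] (EFin \o y).
Proof.
have [_ y_cont _] := sol.
exact: continuous_compact_integrable (@segment_compact _ tau T) y_cont.
Qed.

Lemma solution_y t : tau <= t <= T ->
  y t = \int[lebesgue_measure]_(s in `[t, T]) (lam * ppart a s * g (x s)).
Proof. by case: sol => _ _ /[apply] -[_ ->]; rewrite yT add0r. Qed.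

Lemma solution_x t : tau <= t <= T ->
  x t = x T - \int[lebesgue_measure]_(s in `[t, T]) y s.
Proof. by case: sol => _ _ /[apply] -[]. Qed.

Lemma rhs_ge0 s : 0 <= lam * ppart a s * g (x s).
Proof. by rewrite !mulr_ge0 ?ppart_ge0. Qed.

Lemma solution_y_ge0 t : tau <= t <= T -> 0 <= y t.
Proof. by move=> t_in; rewrite solution_y //; apply: Rintegral_ge0 => s _; exact: rhs_ge0. Qed.

Lemma solution_y_nonincreasing s t : tau <= s -> s <= t -> t <= T -> y t <= y s.
Proof.
move=> tau_s st tT.
have s_in : tau <= s <= T by rewrite tau_s (le_trans st tT).
have t_in : tau <= t <= T by rewrite tT (le_trans tau_s st).
rewrite (solution_y s_in) (solution_y t_in).
apply: ge0_Rintegral_subitv st (lexx T) _ _; last by move=> *; exact: rhs_ge0.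
exact: integrable_subitv tau_s (lexx T) integrable_rhs.
Qed.

Lemma solution_x_nondecreasing s t : tau <= s -> s <= t -> t <= T -> x s <= x t.
Proof.
move=> tau_s st tT.
have s_in : tau <= s <= T by rewrite tau_s (le_trans st tT).
have t_in : tau <= t <= T by rewrite tT (le_trans tau_s st).
rewrite (solution_x s_in) (solution_x t_in) lerD2l lerN2.
apply: ge0_Rintegral_subitv st (lexx T) _ _.
  exact: integrable_subitv tau_s (lexx T) integrable_y.
move=> u /andP[su uT]; apply: solution_y_ge0.
by rewrite uT (le_trans tau_s su).
Qed.

Lemma solution_y_ge_Aplus k1 k2 t : tau <= t <= T ->
  (forall s, t <= s <= T -> k1 <= x s <= k2) ->
  lam * gstar g k1 k2 * Aplus a t T <= y t.
Proof.
move=> /andP[tau_t tT] x_in; rewrite solution_y ?tau_t ?tT // /Aplus.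
have ai := integrable_subitv tau_t (lexx T) (integrable_ppart ha).
rewrite -RintegralZl //; apply: le_Rintegral => //.
- by apply: eq_integrable (integrableZl _ _ ai).
- exact: integrable_subitv tau_t (lexx T) integrable_rhs.
move=> s; rewrite /= in_itv /= => s_in.
rewrite mulrAC ler_wpM2l ?mulr_ge0 ?ppart_ge0 //.
exact: gstar_le (x_in s s_in).
Qed.

Lemma solution_integral_y_ge k1 k2 t : tau <= t <= T ->
  (forall s, t <= s <= T -> k1 <= x s <= k2) ->
  lam * gstar g k1 k2 * \int[lebesgue_measure]_(xi in `[t, T]) Aplus a xi T <=
  \int[lebesgue_measure]_(s in `[t, T]) y s.
Proof.
move=> /andP[tau_t tT] x_in.
have Ai := nonincreasing_integrable (Aplus_nonincreasing_in ha tau_t).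
rewrite -RintegralZl //; apply: le_Rintegral => //.
- by apply: eq_integrable (integrableZl _ _ Ai).
- exact: integrable_subitv tau_t (lexx T) integrable_y.
move=> s; rewrite /= in_itv /= => /andP[ts sT].
apply: solution_y_ge_Aplus; first by rewrite sT (le_trans tau_t ts).
by move=> u /andP[su uT]; apply: x_in; rewrite uT (le_trans ts su).
Qed.

Lemma solution_integral_y_le t : tau <= t <= T ->
  \int[lebesgue_measure]_(s in `[t, T]) y s <= y t * (T - t).
Proof.
move=> /andP[tau_t tT]; rewrite -Rintegral_itv_cst //.
apply: le_Rintegral => //.
- exact: integrable_subitv tau_t (lexx T) integrable_y.
- exact: integrable_itv_cst.
by move=> s; rewrite /= in_itv /= => /andP[ts sT]; exact: solution_y_nonincreasing.
Qed.

End cara_solution.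

Theorem lemma2p5 (R : realType) (tau T : R) (a g : R -> R)
  (htau : 0 < tau) (htauT : tau < T)
  (ha : lebesgue_measure.-integrable `[tau, T] (EFin \o a))
  (hA : forall t, tau <= t < T -> 0 < Aplus a t T)
  (hg : admissible_g g)
  (k3 kT t3 gam3 : R)
  (hk3 : 0 < k3) (hk3T : k3 < kT) (hkT : kT < 1)
  (ht3 : tau < t3) (ht3T : t3 < T)
  (hgam0 : 0 < gam3) (hgam : gam3 <= (kT - k3) / (T - t3))
  (lam : R)
  (hlam : (kT - k3) / (gstar g k3 kT *
            (\int[lebesgue_measure]_(xi in `[t3, T]) Aplus a xi T)) < lam)
  (x y : R -> R)
  (hsol : cara_solution tau T lam a g x y)
  (hxT : x T = kT) (hyT : y T = 0) :
  x t3 < k3 /\ gam3 < y t3.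
Proof.
have t3_in : tau <= t3 <= T by rewrite !ltW.
have t3_lt : tau <= t3 < T by rewrite ltW.
have g_ge0 := admissible_g_ge0 hg; have g_cont := admissible_g_continuous hg.
have gs_gt0 := gstar_gt0 hg hk3 (ltW hk3T) hkT.
have I_gt0 := integral_Aplus_gt0 ha t3_lt hA.
have lam_gt0 : 0 < lam.
  by rewrite (lt_trans _ hlam) // divr_gt0 ?mulr_gt0 // subr_gt0.
move: hlam; rewrite ltr_pdivrMr ?mulr_gt0 // mulrA => hlam.
have y_int_ge := solution_integral_y_ge (ltW htauT) (ltW lam_gt0) ha g_ge0 g_cont hsol hyT.
have x_t3 := solution_x hsol t3_in; rewrite hxT in x_t3.
have x_t3_lt : x t3 < k3.
  rewrite ltNge; apply/negP => k3_le.
  have x_in s : t3 <= s <= T -> k3 <= x s <= kT.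
    case/andP=> t3s sT; rewrite -[kT]hxT.
    have x_nd := solution_x_nondecreasing (ltW lam_gt0) g_ge0 hsol hyT.
    by rewrite (le_trans k3_le (x_nd _ _ (ltW ht3) t3s sT)) x_nd // (le_trans (ltW ht3)).
  have := y_int_ge _ _ _ t3_in x_in; lra.
split => //.
have y_int_le :=
  solution_integral_y_le (ltW htauT) (ltW lam_gt0) ha g_ge0 g_cont hsol hyT t3_in.
apply: le_lt_trans hgam _; rewrite ltr_pdivrMr ?subr_gt0 //; lra.
Qed.
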